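(* There exists $k_0$ such that for all integers $k\ge k_0$, all positive integers $N\ge k4^k$, all $\delta\in(0,2^{-k}/20]$ and all $x\in\left[4^{k^2},N^k/(k-1)!\right]$, \[ \#\mathcal{S}_1(N,\delta,x)\ge\frac{x^{1/k}}{200}. \]
   Context: For $y\in\mathbb{R}$, $\|y\|$ denotes the distance from $y$ to the nearest integer. For a positive integer $N$ and real $\delta,x\ge0$, $\mathcal{S}_1(N,\delta,x):=\{n\in\{1,\dots,N\} : \|x/n\|\ge\delta\}$. *)

From Stdlib Require Import Reals Lra Lia List Arith.
Open Scope R_scope.

Definition dist_nint (y : R) : R := Rmin (frac_part y) (1 - frac_part y).

Definition S1 (N : nat) (delta x : R) : list nat :=
  filter (fun n => if Rle_dec delta (dist_nint (x / INR n)) then true else false)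
         (seq 1 N).

Definition cardS1 (N : nat) (delta x : R) : nat := length (S1 N delta x).

(* Cover part of [1, N] by the blocks {kb, ..., kb + k - 1} with m/2 <= kb and
   kb + k <= m, where m^k = (k-1)! x.  If a block misses S_1, every x/n in it is
   within delta of an integer, hence so is its (k-1)-st finite difference
   u(b) = (k-1)! x / (kb (kb + 1) ... (kb + k - 1)) up to 2^(k-1) delta <= 1/40;
   moreover 1 <= u(b) <= 2^k.  Along consecutive blocks u decreases geometrically,
   by a factor 1 + k^2/m, so it comes within 1/40 of a given integer z for at most
   O(m/(k^2 z)) + 1 blocks.  Summing over z <= 2^k, at most O(m/k) + 2^k of the
   about m/(2k) blocks miss S_1, and m >= k x^(1/k) / 4 with x^(1/k) >= 4^k. *)

From Stdlib Require Import Reals Lra Lia List Arith ZArith.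
Open Scope R_scope.

Lemma filter_length_mono {A : Type} (f g : A -> bool) (l : list A) :
  (forall a, In a l -> f a = true -> g a = true) ->
  (length (filter f l) <= length (filter g l))%nat.
Proof.
  induction l as [|a l IH]; intros Hfg; simpl; [lia|].
  specialize (IH (fun b Hb => Hfg b (or_intror Hb))).
  destruct (f a) eqn:Ef.
  - rewrite (Hfg a (or_introl eq_refl) Ef); simpl; lia.
  - destruct (g a); simpl; lia.
Qed.

Lemma filter_length_orb {A : Type} (f g : A -> bool) (l : list A) :
  (length (filter (fun a => (f a || g a)%bool) l)
   <= length (filter f l) + length (filter g l))%nat.
Proof. induction l as [|a l IH]; simpl; [lia|]. destruct (f a), (g a); simpl; lia. Qed.

Lemma filter_length_existsb {A B : Type} (h : B -> A -> bool) (zs : list B) (l : list A) :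
  (length (filter (fun a => existsb (fun z => h z a) zs) l)
   <= list_sum (map (fun z => length (filter (h z) l)) zs))%nat.
Proof.
  induction zs as [|z zs IH]; simpl.
  - rewrite filter_false; simpl; lia.
  - etransitivity; [apply filter_length_orb|]. lia.
Qed.

Lemma existsb_filter_length {A : Type} (f : A -> bool) (l : list A) :
  ((if existsb f l then 1 else 0) <= length (filter f l))%nat.
Proof.
  destruct (existsb f l) eqn:E; [|lia].
  apply existsb_exists in E as [a [Ha Hfa]].
  assert (Hin : In a (filter f l)) by (apply filter_In; auto).
  destruct (filter f l); [destruct Hin | simpl; lia].
Qed.

Definition count_in (f : nat -> bool) (a L : nat) : nat := length (filter f (seq a L)).

Lemma count_in_S f a L :
  count_in f a (S L) = ((if f a then 1 else 0) + count_in f (S a) L)%nat.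
Proof. unfold count_in; simpl. destruct (f a); reflexivity. Qed.

Lemma count_in_app f a L1 L2 :
  count_in f a (L1 + L2) = (count_in f a L1 + count_in f (a + L1) L2)%nat.
Proof. unfold count_in. rewrite seq_app, filter_app, length_app. reflexivity. Qed.

Lemma count_in_le f a L : (count_in f a L <= L)%nat.
Proof. unfold count_in. rewrite <- (length_seq L a) at 2. apply filter_length_le. Qed.

Lemma count_in_negb f a L :
  (count_in f a L + count_in (fun b => negb (f b)) a L)%nat = L.
Proof. unfold count_in. rewrite filter_length, length_seq. reflexivity. Qed.

Lemma count_in_mono f g a L :
  (forall b, (a <= b < a + L)%nat -> f b = true -> g b = true) ->
  (count_in f a L <= count_in g a L)%nat.
Proof.
  intros H. apply filter_length_mono. intros b Hb. apply H. apply in_seq in Hb. lia.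
Qed.

Lemma count_in_subrange f a L a' L' :
  (a' <= a)%nat -> (a + L <= a' + L')%nat -> (count_in f a L <= count_in f a' L')%nat.
Proof.
  intros H1 H2.
  replace L' with ((a - a') + (L + (a' + L' - a - L)))%nat by lia.
  rewrite !count_in_app. replace (a' + (a - a'))%nat with a by lia. lia.
Qed.

Lemma count_in_false_from f a L K :
  (forall b, (a + K <= b < a + L)%nat -> f b = false) -> (count_in f a L <= K)%nat.
Proof.
  intros H. destruct (Nat.le_gt_cases L K) as [HLK|HLK].
  - pose proof (count_in_le f a L). lia.
  - replace L with (K + (L - K))%nat by lia. rewrite count_in_app.
    assert (Htail : count_in f (a + K) (L - K) = 0%nat).
    { unfold count_in. rewrite (filter_ext_in f (fun _ => false)), filter_false; [reflexivity|].
      intros b Hb. apply in_seq in Hb. apply H. lia. }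
    pose proof (count_in_le f a K). lia.
Qed.

Lemma count_in_le_window f a L M : (1 <= M)%nat ->
  (forall b b', (a <= b)%nat -> (b < b' < a + L)%nat ->
     f b = true -> f b' = true -> (b' < b + M)%nat) ->
  (count_in f a L <= M)%nat.
Proof.
  revert a. induction L as [|L IH]; intros a HM H; [unfold count_in; simpl; lia|].
  rewrite count_in_S. destruct (f a) eqn:Ea.
  - enough (count_in f (S a) L <= M - 1)%nat by lia.
    apply count_in_false_from. intros b Hb.
    destruct (f b) eqn:Eb; [|reflexivity].
    specialize (H a b (le_n a) ltac:(lia) Ea Eb). lia.
  - apply IH; [exact HM|]. intros b b' Hb Hbb' Hfb Hfb'. apply H; auto; lia.
Qed.

Definition block_meets (f : nat -> bool) (k b : nat) : bool := existsb f (seq (k * b) k).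

Lemma count_in_blocks f k a L :
  (count_in (block_meets f k) a L <= count_in f (k * a) (k * L))%nat.
Proof.
  revert a; induction L as [|L IH]; intros a.
  - rewrite Nat.mul_0_r. unfold count_in; simpl; lia.
  - rewrite count_in_S. replace (k * S L)%nat with (k + k * L)%nat by lia.
    rewrite count_in_app. specialize (IH (S a)).
    replace (k * S a)%nat with (k * a + k)%nat in IH by lia.
    pose proof (existsb_filter_length f (seq (k * a) k)).
    unfold block_meets, count_in in *. lia.
Qed.

Lemma INR_list_sum_le {A : Type} (g : A -> nat) (r : A -> R) (zs : list A) :
  (forall z, In z zs -> INR (g z) <= r z) ->
  INR (list_sum (map g zs)) <= fold_right Rplus 0 (map r zs).
Proof.
  induction zs as [|z zs IH]; intros H; simpl; [lra|].
  rewrite plus_INR.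
  specialize (IH (fun w Hw => H w (or_intror Hw))).
  specialize (H z (or_introl eq_refl)). lra.
Qed.

Lemma inv_succ_le_ln_diff z : 0 < z -> / (z + 1) <= ln (z + 1) - ln z.
Proof.
  intros Hz.
  assert (Hinv : 0 < / (z + 1)) by (apply Rinv_0_lt_compat; lra).
  assert (Hexp := exp_ineq1 (- / (z + 1)) ltac:(lra)).
  replace (1 + - / (z + 1)) with (z / (z + 1)) in Hexp by (field; lra).
  apply ln_increasing in Hexp; [|apply Rdiv_lt_0_compat; lra].
  rewrite ln_exp in Hexp. unfold Rdiv in Hexp.
  rewrite ln_mult, ln_Rinv in Hexp by lra. lra.
Qed.

Lemma harmonic_tail_le c a L : 0 <= c -> (1 <= a)%nat ->
  fold_right Rplus 0 (map (fun z => c / INR z + 1) (seq (S a) L))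
  <= c * (ln (INR (a + L)) - ln (INR a)) + INR L.
Proof.
  intros Hc. revert a. induction L as [|L IH]; intros a Ha; cbn [seq map fold_right].
  - rewrite Nat.add_0_r, Rminus_diag. change (INR 0) with 0. lra.
  - specialize (IH (S a) ltac:(lia)).
    replace (S a + L)%nat with (a + S L)%nat in IH by lia.
    assert (Ha' : 0 < INR a) by (apply lt_0_INR; lia).
    pose proof (inv_succ_le_ln_diff (INR a) Ha') as Hln.
    rewrite <- S_INR in Hln.
    assert (c / INR (S a) <= c * (ln (INR (S a)) - ln (INR a))) by
      (unfold Rdiv; apply Rmult_le_compat_l; assumption).
    rewrite (S_INR L), S_INR, !Rmult_minus_distr_l in *. lra.
Qed.

Lemma harmonic_sum_le c Z : 0 <= c -> (1 <= Z)%nat ->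
  fold_right Rplus 0 (map (fun z => c / INR z + 1) (seq 1 Z))
  <= c * (1 + ln (INR Z)) + INR Z.
Proof.
  intros Hc HZ. destruct Z as [|Z]; [lia|].
  pose proof (harmonic_tail_le c 1 Z Hc (le_n 1)) as H.
  cbn [seq map fold_right].
  change (INR 1) with 1 in *. rewrite ln_1 in H.
  replace (1 + Z)%nat with (S Z) in H by lia.
  rewrite (S_INR Z), Rminus_0_r, Rmult_plus_distr_l in *. lra.
Qed.

Lemma bernoulli_ineq t n : 0 <= t -> 1 + INR n * t <= (1 + t) ^ n.
Proof.
  intros Ht. induction n as [|n IH]; [simpl; lra|].
  rewrite S_INR. cbn [pow]. assert (0 <= INR n) by apply pos_INR. nra.
Qed.

Lemma exp_pow a n : exp a ^ n = exp (INR n * a).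
Proof.
  induction n as [|n IH]; [simpl; rewrite Rmult_0_l, exp_0; reflexivity|].
  rewrite S_INR. cbn [pow]. rewrite IH, <- exp_plus. f_equal. ring.
Qed.

Lemma one_plus_inv_pow_le_3 k : (1 <= k)%nat -> (1 + / INR k) ^ k <= 3.
Proof.
  intros Hk. assert (Hk' : 0 < INR k) by (apply lt_0_INR; lia).
  apply Rle_trans with (exp (/ INR k) ^ k).
  - apply pow_incr. assert (0 < / INR k) by (apply Rinv_0_lt_compat; lra).
    split; [lra|]. left. apply exp_ineq1. lra.
  - rewrite exp_pow, Rinv_r by lra. apply exp_le_3.
Qed.

Lemma fact_pred_ge k : (3 <= k)%nat -> (INR k / 4) ^ k <= INR (fact (k - 1)).
Proof.
  intros Hk. induction Hk as [|k Hk IH]; [simpl; lra|].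
  replace (S k - 1)%nat with (S (k - 1)) by lia.
  rewrite fact_simpl, mult_INR. replace (S (k - 1)) with k by lia.
  assert (Hk' : 3 <= INR k) by (replace 3 with (INR 3) by (simpl; lra); apply le_INR; exact Hk).
  assert (Hinv : 0 < / INR k) by (apply Rinv_0_lt_compat; lra).
  replace (INR (S k) / 4) with (INR k / 4 * (1 + / INR k)) by (rewrite S_INR; field; lra).
  rewrite Rpow_mult_distr, <- !tech_pow_Rmult.
  assert (Hprod : (INR k / 4) ^ k * (1 + / INR k) ^ k <= INR (fact (k - 1)) * 3).
  { apply Rmult_le_compat; [apply pow_le; lra | apply pow_le; lra | exact IH |].
    apply one_plus_inv_pow_le_3. lia. }
  replace (INR k / 4 * (INR k / 4) ^ k * ((1 + / INR k) * (1 + / INR k) ^ k))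
    with ((INR k + 1) / 4 * ((INR k / 4) ^ k * (1 + / INR k) ^ k)) by (field; lra).
  assert (0 < INR (fact (k - 1))) by apply INR_fact_lt_0.
  nra.
Qed.

Lemma ln_2_lt_1 : ln 2 < 1.
Proof.
  rewrite <- (ln_exp 1). apply ln_increasing; [lra|].
  pose proof (exp_ineq1 1 ltac:(lra)). lra.
Qed.

Lemma pow_Rpower_inv a k : 0 < a -> (1 <= k)%nat -> Rpower a (1 / INR k) ^ k = a.
Proof.
  intros Ha Hk. rewrite <- Rpower_pow by apply exp_pos.
  rewrite Rpower_mult. replace (1 / INR k * INR k) with 1.
  - apply Rpower_1, Ha.
  - field. apply not_0_INR. lia.
Qed.

Lemma Rpower_pow_inv a k : 0 < a -> (1 <= k)%nat -> Rpower (a ^ k) (1 / INR k) = a.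
Proof.
  intros Ha Hk. rewrite <- Rpower_pow, Rpower_mult by exact Ha.
  replace (INR k * (1 / INR k)) with 1.
  - apply Rpower_1, Ha.
  - field. apply not_0_INR. lia.
Qed.

Lemma le_Rpower_inv a x k : 0 < a -> (1 <= k)%nat -> a ^ k <= x -> a <= Rpower x (1 / INR k).
Proof.
  intros Ha Hk Hx. rewrite <- (Rpower_pow_inv a k Ha Hk).
  apply Rle_Rpower_l.
  - apply Rlt_le, Rdiv_lt_0_compat; [lra | apply lt_0_INR; lia].
  - split; [apply pow_lt, Ha | exact Hx].
Qed.

Lemma Rpower_inv_le a x k : 0 < x -> 0 < a -> (1 <= k)%nat -> x <= a ^ k ->
  Rpower x (1 / INR k) <= a.
Proof.
  intros Hx Ha Hk Hxa. rewrite <- (Rpower_pow_inv a k Ha Hk).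
  apply Rle_Rpower_l.
  - apply Rlt_le, Rdiv_lt_0_compat; [lra | apply lt_0_INR; lia].
  - split; [exact Hx | exact Hxa].
Qed.

Lemma pow_pred_mul_le k delta : (1 <= k)%nat -> delta <= / 2 ^ k / 20 ->
  2 ^ (k - 1) * delta <= 1 / 40.
Proof.
  intros Hk Hdelta.
  replace (2 ^ k) with (2 * 2 ^ (k - 1)) in Hdelta
    by (destruct k; [lia|]; simpl; rewrite Nat.sub_0_r; reflexivity).
  assert (0 < 2 ^ (k - 1)) by (apply pow_lt; lra).
  apply Rmult_le_compat_l with (r := 2 ^ (k - 1)) in Hdelta; [|lra].
  replace (2 ^ (k - 1) * (/ (2 * 2 ^ (k - 1)) / 20)) with (1 / 40) in Hdelta by (field; lra).
  exact Hdelta.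
Qed.

Lemma exists_nat_between r : 0 <= r -> exists M : nat, r < INR M <= r + 1.
Proof.
  intros Hr. destruct (archimed r) as [Hup1 Hup2].
  assert (Hpos : (0 <= up r)%Z) by (apply le_IZR; lra).
  exists (Z.to_nat (up r)). rewrite INR_IZR_INZ, Z2Nat.id by exact Hpos. lra.
Qed.

Definition near_int (y e : R) : Prop := exists z : Z, Rabs (y - IZR z) < e.

Lemma dist_nint_near_int y e : dist_nint y < e -> near_int y e.
Proof.
  unfold dist_nint, frac_part. intros H.
  destruct (base_Int_part y) as [F1 F2].
  unfold Rmin in H. destruct (Rle_dec (y - IZR (Int_part y)) (1 - (y - IZR (Int_part y)))).
  - exists (Int_part y). rewrite Rabs_right; lra.
  - exists (Int_part y + 1)%Z. rewrite plus_IZR, Rabs_left1; lra.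
Qed.

Lemma near_int_sub a b e1 e2 : near_int a e1 -> near_int b e2 -> near_int (a - b) (e1 + e2).
Proof.
  intros [z1 H1] [z2 H2]. exists (z1 - z2)%Z. rewrite minus_IZR.
  replace (a - b - (IZR z1 - IZR z2)) with ((a - IZR z1) - (b - IZR z2)) by ring.
  eapply Rle_lt_trans; [apply Rabs_triang|]. rewrite Rabs_Ropp. lra.
Qed.

Lemma near_int_nat y e (Y : nat) : near_int y e -> e <= 1 -> 1 <= y <= INR Y ->
  exists n : nat, (1 <= n <= Y)%nat /\ Rabs (y - INR n) < e.
Proof.
  intros [z Hz] He Hy. apply Rabs_def2 in Hz as [Hz1 Hz2].
  assert (Hz0 : (0 < z)%Z) by (apply lt_IZR; lra).
  exists (Z.to_nat z).
  assert (Ez : INR (Z.to_nat z) = IZR z) by (rewrite INR_IZR_INZ, Z2Nat.id; [reflexivity | lia]).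
  rewrite Ez. split; [split|].
  - lia.
  - apply Nat.lt_succ_r, INR_lt. rewrite S_INR, Ez. lra.
  - apply Rabs_def1; lra.
Qed.

Fixpoint fdiff (f : nat -> R) (j n : nat) : R :=
  match j with
  | O => f n
  | S j => fdiff f j n - fdiff f j (S n)
  end.

Lemma fdiff_near_int f e j n :
  (forall i, (i <= j)%nat -> near_int (f (n + i)%nat) e) -> near_int (fdiff f j n) (2 ^ j * e).
Proof.
  revert n. induction j as [|j IH]; intros n H; simpl.
  - rewrite Rmult_1_l, <- (Nat.add_0_r n). apply H. lia.
  - replace (2 * 2 ^ j * e) with (2 ^ j * e + 2 ^ j * e) by ring.
    apply near_int_sub; apply IH; intros i Hi.
    + apply H. lia.
    + replace (S n + i)%nat with (n + S i)%nat by lia. apply H. lia.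
Qed.

Fixpoint rising (n j : nat) : R :=
  match j with
  | O => 1
  | S j => rising n j * INR (n + j)
  end.

Lemma rising_pos n j : (1 <= n)%nat -> 0 < rising n j.
Proof.
  intros Hn. induction j as [|j IH]; simpl; [lra|].
  apply Rmult_lt_0_compat; [exact IH | apply lt_0_INR; lia].
Qed.

Lemma rising_succ_l n j : rising n (S j) = INR n * rising (S n) j.
Proof.
  induction j as [|j IH]; [simpl; rewrite Nat.add_0_r; ring|].
  change (rising n (S (S j))) with (rising n (S j) * INR (n + S j)).
  change (rising (S n) (S j)) with (rising (S n) j * INR (S n + j)).
  rewrite IH. replace (n + S j)%nat with (S n + j)%nat by lia. ring.
Qed.

Lemma pow_le_rising n j : INR n ^ j <= rising n j.
Proof.
  induction j as [|j IH]; simpl; [lra|]. rewrite Rmult_comm.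
  apply Rmult_le_compat; [apply pow_le, pos_INR | apply pos_INR | exact IH | apply le_INR; lia].
Qed.

Lemma rising_le_pow n j : rising n j <= INR (n + j) ^ j.
Proof.
  induction j as [|j IH]; simpl; [lra|]. rewrite Rmult_comm.
  apply Rmult_le_compat.
  - apply pos_INR.
  - eapply Rle_trans; [apply pow_le, pos_INR | apply pow_le_rising].
  - apply le_INR. lia.
  - eapply Rle_trans; [exact IH|]. apply pow_incr. split; [apply pos_INR | apply le_INR; lia].
Qed.

Lemma rising_nonneg n j : 0 <= rising n j.
Proof. eapply Rle_trans; [apply pow_le, pos_INR | apply pow_le_rising]. Qed.

Lemma rising_shift_ge n s j m : 0 < m -> INR (n + j) <= m ->
  rising n j * (1 + INR s / m) ^ j <= rising (n + s) j.
Proof.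
  intros Hm. induction j as [|j IH]; intros Hnj; simpl; [lra|].
  assert (Hle : INR (n + j) <= m) by (eapply Rle_trans; [apply le_INR | exact Hnj]; lia).
  assert (Hs : 0 <= INR s / m)
    by (unfold Rdiv; apply Rmult_le_pos; [apply pos_INR | left; apply Rinv_0_lt_compat, Hm]).
  assert (Hfac : INR (n + j) * (1 + INR s / m) <= INR (n + s + j)).
  { assert (Hratio : INR (n + j) / m <= 1).
    { apply Rmult_le_reg_r with m; [exact Hm|]. unfold Rdiv. rewrite Rmult_assoc, Rinv_l; lra. }
    replace (INR (n + j) * (1 + INR s / m)) with (INR (n + j) + INR s * (INR (n + j) / m))
      by (field; lra).
    replace (INR (n + s + j)) with (INR (n + j) + INR s) by (rewrite !plus_INR; ring).
    pose proof (pos_INR s). nra. }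
  replace (rising n j * INR (n + j) * ((1 + INR s / m) * (1 + INR s / m) ^ j))
    with ((rising n j * (1 + INR s / m) ^ j) * (INR (n + j) * (1 + INR s / m))) by ring.
  apply Rmult_le_compat; [| | exact (IH Hle) | exact Hfac].
  - apply Rmult_le_pos; [apply rising_nonneg | apply pow_le; lra].
  - apply Rmult_le_pos; [apply pos_INR | lra].
Qed.

Lemma fdiff_inv x j n : (1 <= n)%nat ->
  fdiff (fun n => x / INR n) j n = x * INR (fact j) / rising n (S j).
Proof.
  revert n. induction j as [|j IH]; intros n Hn.
  - simpl. rewrite Nat.add_0_r. field. apply not_0_INR. lia.
  - cbn [fdiff]. rewrite !IH by lia.
    rewrite (rising_succ_l n (S j)), (rising_succ_l n j).
    change (rising (S n) (S j)) with (rising (S n) j * INR (S n + j)).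
    assert (0 < rising (S n) j) by (apply rising_pos; lia).
    assert (0 < INR n) by (apply lt_0_INR; lia).
    rewrite fact_simpl, mult_INR, plus_INR, !S_INR.
    field. pose proof (pos_INR j). repeat split; lra.
Qed.

Definition close_to (u : nat -> R) (z e : R) (b : nat) : bool :=
  if Rlt_dec (Rabs (u b - z)) e then true else false.

Section GeometricDecay.

Variables (u : nat -> R) (kappa : R) (a L : nat).
Hypothesis Hkappa : 0 < kappa.
Hypothesis Hdecay : forall b, (a <= b)%nat -> (S b < a + L)%nat -> u (S b) * (1 + kappa) <= u b.

Lemma decay_pow b d : (a <= b)%nat -> (b + d < a + L)%nat ->
  u (b + d)%nat * (1 + kappa) ^ d <= u b.
Proof.
  intros Hb. induction d as [|d IH]; intros Hbd.
  - rewrite Nat.add_0_r. simpl. lra.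
  - replace (b + S d)%nat with (S (b + d)) by lia.
    specialize (IH ltac:(lia)).
    assert (Hstep := Hdecay (b + d) ltac:(lia) ltac:(lia)).
    assert (0 < (1 + kappa) ^ d) by (apply pow_lt; lra).
    cbn [pow]. nra.
Qed.

Lemma decay_gap b d : (a <= b)%nat -> (b + d < a + L)%nat -> 0 <= u (b + d)%nat ->
  INR d * kappa * u (b + d)%nat <= u b - u (b + d)%nat.
Proof.
  intros Hb Hbd Hu.
  pose proof (decay_pow b d Hb Hbd).
  pose proof (bernoulli_ineq kappa d ltac:(lra)).
  nra.
Qed.

Lemma count_close_le z e : 0 < e < z ->
  INR (count_in (close_to u z e) a L) <= 2 * e / (kappa * (z - e)) + 1.
Proof.
  intros He.
  assert (Hden : 0 < kappa * (z - e)) by (apply Rmult_lt_0_compat; lra).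
  assert (Hr : 0 <= 2 * e / (kappa * (z - e))) by (apply Rlt_le, Rdiv_lt_0_compat; lra).
  destruct (exists_nat_between _ Hr) as [M [HM1 HM2]].
  apply Rle_trans with (INR M); [|exact HM2].
  apply le_INR, count_in_le_window.
  { destruct M; [simpl in HM1; lra | lia]. }
  intros b b' Hb [Hbb' Hb'] Eb Eb'. unfold close_to in Eb, Eb'.
  destruct (Rlt_dec (Rabs (u b - z)) e) as [Cb|]; [|discriminate].
  destruct (Rlt_dec (Rabs (u b' - z)) e) as [Cb'|]; [|discriminate].
  apply Rabs_def2 in Cb, Cb'.
  assert (Hgap := decay_gap b (b' - b) Hb ltac:(lia)).
  replace (b + (b' - b))%nat with b' in Hgap by lia.
  specialize (Hgap ltac:(lra)).
  enough (Hlt : INR (b' - b) < INR M) by (apply INR_lt in Hlt; lia).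
  apply Rle_lt_trans with (2 * e / (kappa * (z - e))); [|exact HM1].
  apply Rmult_le_reg_r with (kappa * (z - e)); [exact Hden|].
  unfold Rdiv. rewrite Rmult_assoc, Rinv_l by lra.
  pose proof (pos_INR (b' - b)). nra.
Qed.

End GeometricDecay.

Definition in_S1 (delta x : R) (n : nat) : bool :=
  if Rle_dec delta (dist_nint (x / INR n)) then true else false.

Section Blocks.

Variables (delta x m : R) (k B L : nat).
Hypothesis Hk : (1 <= k)%nat.
Hypothesis Hm : 0 < m.
Hypothesis Hmk : m ^ k = INR (fact (k - 1)) * x.
Hypothesis Hdelta : 2 ^ (k - 1) * delta <= 1 / 40.
Hypothesis HB : m / 2 <= INR (k * B).
Hypothesis HBL : INR (k * (B + L)) <= m.

(* By [fdiff_inv], [u b] is the (k-1)-st finite difference of [n |-> x / n] at the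
   first element [k * b] of block [b]. *)
Let u (b : nat) : R := m ^ k / rising (k * b) k.
Let kappa : R := INR k * INR k / m.
Let meets : nat -> bool := block_meets (in_S1 delta x) k.

Lemma block_start_pos b : (B <= b)%nat -> (1 <= k * b)%nat.
Proof.
  intros Hb. assert (HkB : (0 < k * B)%nat) by (apply INR_lt; simpl; lra). nia.
Qed.

Lemma block_end_le b : (b < B + L)%nat -> INR (k * b + k) <= m.
Proof. intros Hb. eapply Rle_trans; [apply le_INR | exact HBL]. nia. Qed.

Lemma block_fdiff_bounds b : (B <= b < B + L)%nat -> 1 <= u b <= 2 ^ k.
Proof.
  intros [Hb1 Hb2].
  assert (HP : 0 < rising (k * b) k) by (apply rising_pos, block_start_pos, Hb1).
  assert (Hpow : forall r s, 0 <= r <= s -> r ^ k <= s ^ k) by (intros; apply pow_incr; lra).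
  unfold u. split.
  - apply Rmult_le_reg_r with (rising (k * b) k); [exact HP|].
    unfold Rdiv. rewrite Rmult_assoc, Rinv_l, Rmult_1_r, Rmult_1_l by lra.
    eapply Rle_trans; [apply rising_le_pow|].
    apply Hpow. split; [apply pos_INR | apply block_end_le, Hb2].
  - apply Rmult_le_reg_r with (rising (k * b) k); [exact HP|].
    unfold Rdiv. rewrite Rmult_assoc, Rinv_l, Rmult_1_r by lra.
    eapply Rle_trans; [|apply Rmult_le_compat_l; [apply pow_le; lra | apply pow_le_rising]].
    rewrite <- Rpow_mult_distr. apply Hpow.
    assert (INR (k * B) <= INR (k * b)) by (apply le_INR; nia). lra.
Qed.

Lemma block_fdiff_decay b : (B <= b)%nat -> (b < B + L)%nat -> u (S b) * (1 + kappa) <= u b.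
Proof.
  intros Hb1 Hb2.
  set (P := rising (k * b) k). set (P' := rising (k * S b) k).
  assert (HP : 0 < P) by (apply rising_pos, block_start_pos, Hb1).
  assert (HP' : 0 < P') by (apply rising_pos, block_start_pos; lia).
  assert (Hgrowth : P * (1 + kappa) <= P').
  { assert (Hkm : 0 <= INR k / m)
      by (unfold Rdiv; apply Rmult_le_pos; [apply pos_INR | left; apply Rinv_0_lt_compat, Hm]).
    pose proof (bernoulli_ineq (INR k / m) k Hkm) as Hbern.
    pose proof (rising_shift_ge (k * b) k k m Hm (block_end_le b Hb2)) as Hshift.
    replace (k * b + k)%nat with (k * S b)%nat in Hshift by lia.
    unfold kappa. replace (INR k * INR k / m) with (INR k * (INR k / m)) by (field; lra).
    eapply Rle_trans; [|exact Hshift]. apply Rmult_le_compat_l; [apply Rlt_le, HP | exact Hbern]. }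
  unfold u. fold P P'.
  replace (m ^ k / P' * (1 + kappa)) with (m ^ k / (P * P') * (P * (1 + kappa))) by (field; lra).
  replace (m ^ k / P) with (m ^ k / (P * P') * P') by (field; lra).
  apply Rmult_le_compat_l; [|exact Hgrowth].
  apply Rlt_le, Rdiv_lt_0_compat; [apply pow_lt, Hm | apply Rmult_lt_0_compat; assumption].
Qed.

Lemma missed_block_close b : (B <= b < B + L)%nat -> meets b = false ->
  exists z : nat, (1 <= z <= 2 ^ k)%nat /\ close_to u (INR z) (1 / 40) b = true.
Proof.
  intros Hb Hmiss.
  assert (Hnear : forall i, (i <= k - 1)%nat -> near_int (x / INR (k * b + i)) delta).
  { intros i Hi. apply dist_nint_near_int.
    destruct (in_S1 delta x (k * b + i)) eqn:Ein.
    - assert (Hmeets : meets b = true).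
      { apply existsb_exists. exists (k * b + i)%nat. split; [apply in_seq; lia | exact Ein]. }
      congruence.
    - unfold in_S1 in Ein. destruct (Rle_dec delta _); [discriminate | lra]. }
  pose proof (fdiff_near_int (fun n => x / INR n) delta (k - 1) (k * b) Hnear) as Hfd.
  rewrite fdiff_inv in Hfd by (apply block_start_pos; lia).
  replace (S (k - 1)) with k in Hfd by lia.
  replace (x * INR (fact (k - 1)) / rising (k * b) k) with (u b) in Hfd
    by (unfold u; rewrite Hmk; unfold Rdiv; ring).
  destruct (near_int_nat (u b) _ (2 ^ k) Hfd) as [z [Hz Hclose]].
  - lra.
  - rewrite pow_INR. apply block_fdiff_bounds, Hb.
  - exists z. split; [exact Hz|]. unfold close_to.
    destruct (Rlt_dec _ _); [reflexivity | lra].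
Qed.

Lemma missed_blocks_le :
  INR (count_in (fun b => negb (meets b)) B L) <= 2 * (1 + INR k) / (39 * kappa) + 2 ^ k.
Proof.
  set (close := fun z => close_to u (INR z) (1 / 40)).
  set (c := 2 / (39 * kappa)).
  assert (Hkappa : 0 < kappa) by (unfold kappa; apply Rdiv_lt_0_compat; [|exact Hm];
    assert (0 < INR k) by (apply lt_0_INR; lia); nra).
  assert (Hcover : (count_in (fun b => negb (meets b)) B L
                    <= count_in (fun b => existsb (fun z => close z b) (seq 1 (2 ^ k))) B L)%nat).
  { apply count_in_mono. intros b Hb Hneg.
    destruct (missed_block_close b Hb) as [z [Hz Hzb]]; [destruct (meets b); easy|].
    apply existsb_exists. exists z. split; [apply in_seq; lia | exact Hzb]. }
  pose proof (filter_length_existsb close (seq 1 (2 ^ k)) (seq B L)) as Hunion.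
  assert (Hz : forall z, In z (seq 1 (2 ^ k)) -> INR (count_in (close z) B L) <= c / INR z + 1).
  { intros z Hz. apply in_seq in Hz.
    assert (Hz1 : 1 <= INR z) by (apply (le_INR 1); lia).
    eapply Rle_trans.
    - apply (count_close_le u kappa B L Hkappa); [|lra].
      intros b Hb1 Hb2. apply block_fdiff_decay; lia.
    - apply Rplus_le_compat_r.
      replace (2 * (1 / 40) / (kappa * (INR z - 1 / 40)))
        with (/ (20 * kappa) * / (INR z - 1 / 40)) by (field; lra).
      replace (c / INR z) with (/ (20 * kappa) * / (39 * INR z / 40)) by (unfold c; field; lra).
      apply Rmult_le_compat_l; [left; apply Rinv_0_lt_compat; lra|].
      apply Rinv_le_contravar; lra. }
  pose proof (INR_list_sum_le _ _ _ Hz) as Hsum.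
  assert (Hc : 0 <= c) by (unfold c; apply Rlt_le, Rdiv_lt_0_compat; lra).
  pose proof (harmonic_sum_le c (2 ^ k) Hc ltac:(apply (Nat.pow_le_mono_r 2 0 k); lia)) as Hharm.
  rewrite pow_INR in Hharm. change (INR 2) with 2 in Hharm. rewrite ln_pow in Hharm by lra.
  assert (Hln : INR k * ln 2 <= INR k).
  { pose proof ln_2_lt_1. pose proof (pos_INR k). nra. }
  replace (2 * (1 + INR k) / (39 * kappa)) with (c * (1 + INR k)) by (unfold c; field; lra).
  apply le_INR in Hcover. apply le_INR in Hunion. unfold count_in in *.
  assert (c * (1 + INR k * ln 2) <= c * (1 + INR k)) by (apply Rmult_le_compat_l; lra).
  lra.
Qed.

Lemma count_S1_blocks_ge :
  INR L - (2 * (1 + INR k) * m / (39 * INR k * INR k) + 2 ^ k)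
  <= INR (count_in (in_S1 delta x) (k * B) (k * L)).
Proof.
  pose proof (count_in_negb meets B L) as Hsplit.
  pose proof (count_in_blocks (in_S1 delta x) k B L) as Hblocks.
  pose proof missed_blocks_le as Hmissed.
  replace (2 * (1 + INR k) * m / (39 * INR k * INR k)) with (2 * (1 + INR k) / (39 * kappa))
    by (unfold kappa; field; split; [apply not_0_INR; lia | lra]).
  apply (f_equal INR) in Hsplit. rewrite plus_INR in Hsplit.
  apply le_INR in Hblocks. unfold meets in *. lra.
Qed.

End Blocks.

Lemma exists_block_range (m : R) (k : nat) : (1 <= k)%nat -> 4 * INR k <= m ->
  exists B L : nat,
    m / 2 <= INR (k * B) /\ INR (k * (B + L)) <= m /\ m / (2 * INR k) - 2 <= INR L.
Proof.
  intros Hk Hm. assert (Hk0 : 0 < INR k) by (apply lt_0_INR; lia).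
  set (t := m / INR k).
  assert (Hmt : m = INR k * t) by (unfold t; field; lra).
  assert (Ht : 4 <= t) by (rewrite Hmt in Hm; nra).
  destruct (exists_nat_between (t / 2)) as [B [HB1 HB2]]; [lra|].
  destruct (exists_nat_between (t - 1)) as [T [HT1 HT2]]; [lra|].
  assert (HBT : (B <= T)%nat) by (apply INR_le; lra).
  exists B, (T - B)%nat.
  replace (B + (T - B))%nat with T by lia.
  rewrite !mult_INR, minus_INR by exact HBT.
  replace (m / (2 * INR k)) with (t / 2) by (rewrite Hmt; field; lra).
  rewrite Hmt. split; [|split]; nra.
Qed.

Lemma cardS1_ge_blocks (N k : nat) (delta x m : R) : (1 <= k)%nat -> 0 < m ->
  m ^ k = INR (fact (k - 1)) * x -> 2 ^ (k - 1) * delta <= 1 / 40 ->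
  4 * INR k <= m -> m <= INR N ->
  m / (2 * INR k) - 2 - (2 * (1 + INR k) * m / (39 * INR k * INR k) + 2 ^ k)
  <= INR (cardS1 N delta x).
Proof.
  intros Hk Hm Hmk Hdelta HkM HmN.
  destruct (exists_block_range m k Hk HkM) as (B & L & HB & HBL & HL).
  pose proof (count_S1_blocks_ge delta x m k B L Hk Hm Hmk Hdelta HB HBL) as Hcount.
  assert (Hsub : (count_in (in_S1 delta x) (k * B) (k * L) <= cardS1 N delta x)%nat).
  { apply count_in_subrange.
    - apply INR_lt. simpl. lra.
    - enough (k * (B + L) <= N)%nat by lia. apply INR_le. lra. }
  apply le_INR in Hsub. lra.
Qed.

Lemma exists_root_fact_mul (k N : nat) (x : R) : (3 <= k)%nat -> (0 < N)%nat -> 0 < x ->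
  x <= INR N ^ k / INR (fact (k - 1)) ->
  exists m : R, 0 < m /\ m ^ k = INR (fact (k - 1)) * x /\ m <= INR N /\
                INR k / 4 * Rpower x (1 / INR k) <= m.
Proof.
  intros Hk HN Hx Hxk.
  assert (HF : 0 < INR (fact (k - 1))) by apply INR_fact_lt_0.
  assert (Hk4 : 0 < INR k / 4) by (assert (0 < INR k) by (apply lt_0_INR; lia); lra).
  exists (Rpower (INR (fact (k - 1)) * x) (1 / INR k)). split; [|split; [|split]].
  - apply exp_pos.
  - apply pow_Rpower_inv; [nra | lia].
  - apply Rpower_inv_le; [nra | apply lt_0_INR; lia | lia |].
    apply Rmult_le_compat_l with (r := INR (fact (k - 1))) in Hxk; [|lra].
    replace (INR (fact (k - 1)) * (INR N ^ k / INR (fact (k - 1)))) with (INR N ^ k) in Hxk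
      by (field; lra).
    exact Hxk.
  - rewrite <- Rpower_mult_distr by lra.
    apply Rmult_le_compat_r; [apply Rlt_le, exp_pos|].
    apply le_Rpower_inv; [exact Hk4 | lia | apply fact_pred_ge, Hk].
Qed.

Theorem lemma3p9 :
  exists k0 : nat,
    forall (k N : nat) (delta x : R),
      (k0 <= k)%nat ->
      (0 < N)%nat ->
      (k * 4 ^ k <= N)%nat ->
      0 < delta -> delta <= / (2 ^ k) / 20 ->
      4 ^ (k * k) <= x -> x <= (INR N) ^ k / INR (Factorial.fact (k - 1)) ->
      INR (cardS1 N delta x) >= Rpower x (1 / INR k) / 200.
Proof.
  exists 10%nat. intros k N delta x Hk HN _ Hdelta0 Hdelta Hx1 Hx2.
  assert (Hk10 : 10 <= INR k) by (apply (le_INR 10) in Hk; simpl in Hk; lra).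
  assert (Hx0 : 0 < x) by (pose proof (pow_lt 4 (k * k)); lra).
  set (y := Rpower x (1 / INR k)).
  assert (Hy : 2 ^ k * 2 ^ k <= y).
  { rewrite <- Rpow_mult_distr. apply le_Rpower_inv; [apply pow_lt; lra | lia |].
    rewrite <- pow_mult. replace (2 * 2) with 4 by lra. exact Hx1. }
  assert (H2k : 1024 <= 2 ^ k)
    by (replace 1024 with (2 ^ 10) by (simpl; lra); apply Rle_pow; [lra | lia]).
  assert (Hy2k : 1024 * 2 ^ k <= y)
    by (apply Rle_trans with (2 ^ k * 2 ^ k); [apply Rmult_le_compat_r; lra | exact Hy]).
  pose proof (pow_pred_mul_le k delta ltac:(lia) Hdelta) as Hdk.
  destruct (exists_root_fact_mul k N x ltac:(lia) HN Hx0 Hx2) as (m & Hm0 & Hmk & HmN & Hmy).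
  fold y in Hmy.
  assert (Hkm : 4 * INR k <= m).
  { assert (INR k / 4 * 16 <= INR k / 4 * y) by (apply Rmult_le_compat_l; lra). lra. }
  pose proof (cardS1_ge_blocks N k delta x m ltac:(lia) Hm0 Hmk Hdk Hkm HmN) as Hcard.
  set (t := m / INR k).
  assert (Ht : y / 4 <= t)
    by (unfold t; apply Rmult_le_reg_r with (INR k); [lra|]; field_simplify; lra).
  replace (m / (2 * INR k)) with (t / 2) in Hcard by (unfold t; field; lra).
  replace (2 * (1 + INR k) * m / (39 * INR k * INR k)) with (2 / 39 * (1 + / INR k) * t) in Hcard
    by (unfold t; field; lra).
  assert (/ INR k <= / 10) by (apply Rinv_le_contravar; lra).
  assert (2 / 39 * (1 + / INR k) * t <= 2.2 / 39 * t) by nra.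
  apply Rle_ge. lra.
Qed.
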